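(* Let $G=(V,E)$ be an $S$-regular graph with cells $V_1,\dots,V_k$, $n_i=|V_i|$, cell function $\tau$, and let $B\subseteq V$. Write $B_i=B\cap V_i$, $b_i=|B_i|/n_i$, and $N_{B_i}(v)$ for the set of neighbours of $v$ in $B_i$. Then \[\sum_{v\in V}\sum_{i=1}^k\Bigl(|N_{B_i}(v)|-b_is_{\tau(v)i}\Bigr)^2\le\lambda_B^2\sum_{i=1}^k b_i(1-b_i)n_i.\]
   Context: All graphs are simple, undirected and connected. $G$ is $S$-regular ($S=(s_{ij})$ a $k\times k$ nonnegative integer matrix) if $V$ is partitioned into nonempty cells $V_1,\dots,V_k$ such that every vertex of $V_i$ has exactly $s_{ij}$ neighbours in $V_j$; $\tau(v)=i$ for $v\in V_i$. Let $A$ be the adjacency matrix, $|V|=n>k$. The subspace $W=\mathrm{span}\{\mathbf{1}_{V_1},\dots,\mathbf{1}_{V_k}\}$ is $A$-invariant, with eigenvalues on $W$ equal to those of $S$; the eigenvalues of $A$ on $W^\perp$ are the bulk eigenvalues, and $\lambda_B$ is the largest absolute value of a bulk eigenvalue. *)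

From HB Require Import structures.
From mathcomp Require Import all_boot all_order all_algebra.
From mathcomp Require Import reals.
Set Implicit Arguments. Unset Strict Implicit. Unset Printing Implicit Defensive.
Import Order.TTheory GRing.Theory Num.Theory.
Local Open Scope ring_scope.

Definition simple_connected_graph (n : nat) (adj : rel 'I_n) : Prop :=
  symmetric adj /\ irreflexive adj /\ (forall u v, connect adj u v).

(* G is S-regular w.r.t. the cell function tau : V -> 'I_k
   (cell V_i = tau^-1(i)); all cells nonempty and each vertex of V_i has
   exactly s_ij neighbours in V_j. *)
Definition S_regular (n k : nat) (adj : rel 'I_n) (tau : 'I_n -> 'I_k)
  (S : 'M[nat]_k) : Prop :=
  (forall i : 'I_k, exists v, tau v = i) /\
  (forall (v : 'I_n) (j : 'I_k),
      #|[set u | adj v u && (tau u == j)]| = S (tau v) j).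

Definition adjmx (R : realType) (n : nat) (adj : rel 'I_n) : 'M[R]_n :=
  \matrix_(i, j) (adj i j)%:R.

Definition cell_ind (R : realType) (n k : nat) (tau : 'I_n -> 'I_k) (i : 'I_k)
  : 'cV[R]_n := \col_v (tau v == i)%:R.

Definition in_Wperp (R : realType) (n k : nat) (tau : 'I_n -> 'I_k)
  (x : 'cV[R]_n) : Prop :=
  forall i : 'I_k, (cell_ind R tau i)^T *m x = 0.

Definition bulk_eigenvalue (R : realType) (n k : nat) (adj : rel 'I_n)
  (tau : 'I_n -> 'I_k) (l : R) : Prop :=
  exists x : 'cV[R]_n, [/\ x != 0, in_Wperp tau x & adjmx R adj *m x = l *: x].

Definition is_lambdaB (R : realType) (n k : nat) (adj : rel 'I_n)
  (tau : 'I_n -> 'I_k) (lB : R) : Prop :=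
  (exists l, bulk_eigenvalue adj tau l /\ `|l| = lB) /\
  (forall l, bulk_eigenvalue adj tau l -> `|l| <= lB).

From HB Require Import structures.
From mathcomp Require Import all_boot all_order all_algebra.
From mathcomp Require Import reals complex.
From mathcomp.algebra_tactics Require Import ring lra.
Import Order.TTheory GRing.Theory Num.Theory.
Local Open Scope ring_scope.

Set Implicit Arguments. Unset Strict Implicit. Unset Printing Implicit Defensive.

(* For fixed i, put x_i := 1_{B_i} - b_i 1_{V_i}.  Then the sum over v of the
   i-th squared deviations is |A x_i|^2, and b_i (1 - b_i) n_i = |x_i|^2.  Each
   x_i lies in W^perp, which is A-invariant by S-regularity, so it suffices to
   show |A x| <= lambda_B |x| on W^perp.  Instead of the spectral theorem we
   prove this for every x killed by some nonzero p(A), by induction on deg p,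
   starting from Cayley-Hamilton.  If p = q (X - a) with a real, y = q(A) x is
   zero or an eigenvector in W^perp, and x splits orthogonally into a multiple
   of y and a vector killed by q(A).  Otherwise p has a factor (X - a)^2 + b^2
   with b <> 0, and (A - a)^2 + b^2 is injective because A is symmetric. *)

Section Dot.
Variables (R : realDomainType) (n : nat).
Implicit Types (x y z : 'cV[R]_n).

Definition dot x y : R := (x^T *m y) 0 0.

Lemma dotE x y : dot x y = \sum_i x i 0 * y i 0.
Proof. by rewrite /dot mxE; apply: eq_bigr => i _; rewrite mxE. Qed.

Lemma dotC x y : dot x y = dot y x.
Proof. by rewrite !dotE; apply: eq_bigr => i _; rewrite mulrC. Qed.

Lemma dotDl x y z : dot (x + y) z = dot x z + dot y z.
Proof. by rewrite /dot linearD /= mulmxDl mxE. Qed.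

Lemma dotDr x y z : dot z (x + y) = dot z x + dot z y.
Proof. by rewrite dotC dotDl !(dotC z). Qed.

Lemma dotZl c x y : dot (c *: x) y = c * dot x y.
Proof. by rewrite /dot linearZ /= -scalemxAl mxE. Qed.

Lemma dotZr c x y : dot x (c *: y) = c * dot x y.
Proof. by rewrite dotC dotZl dotC. Qed.

Lemma dot0r x : dot x 0 = 0.
Proof. by rewrite /dot mulmx0 mxE. Qed.

Lemma dot_mulmxl (M : 'M_n) x y : dot (M *m x) y = dot x (M^T *m y).
Proof. by rewrite /dot trmx_mul mulmxA. Qed.

Lemma dotxx_ge0 x : 0 <= dot x x.
Proof. by rewrite dotE sumr_ge0 // => i _; rewrite -expr2 sqr_ge0. Qed.

Lemma dotxx_eq0 x : (dot x x == 0) = (x == 0).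
Proof.
apply/idP/idP => [|/eqP->]; last by rewrite dot0r.
rewrite dotE psumr_eq0 => [/allP x0|i _]; last by rewrite -expr2 sqr_ge0.
apply/eqP/matrixP => i j; rewrite (ord1 j) mxE.
by have := x0 i (mem_index_enum _); rewrite -expr2 sqrf_eq0 => /eqP.
Qed.

Lemma dotxxD_orth x y : dot x y = 0 -> dot (x + y) (x + y) = dot x x + dot y y.
Proof. by move=> xy0; rewrite dotDl !dotDr (dotC y) xy0 addr0 add0r. Qed.

End Dot.

Lemma real_root_or_quadratic_factor (R : rcfType) (p : {poly R}) :
  size p != 1 ->
  (exists a, root p a) \/
  (exists a b, b != 0 /\ ('X - a%:P) ^+ 2 + (b ^+ 2)%:P %| p).
Proof.
rewrite -(size_map_poly (real_complex R)) => /closed_rootP [[a b] pz0].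
have Dz : (a +i* b)%C = (a%:C + 'i * b%:C)%C by rewrite [LHS]complexE.
have [b0|b0] := eqVneq b 0.
  left; exists a; move: pz0.
  by rewrite Dz b0 mulr0 addr0 /root horner_map fmorph_eq0.
right; exists a, b; split => //.
set z := (a +i* b)%C.
have Dzc : conjc z = (a%:C - 'i * b%:C)%C.
  by apply/eqP; rewrite eq_complex /=; apply/andP; split; apply/eqP; ring.
rewrite -(dvdp_map (real_complex R)) rmorphD rmorphXn rmorphB /=.
rewrite map_polyX !map_polyC /=.
have -> : (b ^+ 2)%:C%C = - ('i%C * b%:C%C) ^+ 2.
  by rewrite exprMn sqr_i mulN1r opprK rmorphXn.
have -> : ('X - (a%:C)%C%:P) ^+ 2 + (- ('i * b%:C) ^+ 2)%C%:P =
          ('X - z%:P) * ('X - (conjc z)%:P) :> {poly R[i]}.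
  by rewrite Dzc /z Dz !polyCD !polyCN rmorphXn /=; ring.
have zcz : conjc z != z.
  by apply/negP => /eqP[]; move/eqP: b0 => b0 hb; apply: b0; lra.
have [g Dg] := factor_theorem _ _ pz0.
have : root (map_poly (real_complex R) p) (conjc z).
  rewrite -complex_root_conj -map_poly_comp.
  by rewrite (eq_map_poly (@conjc_real R)).
rewrite Dg rootM root_XsubC (negbTE zcz) orbF => /factor_theorem [h ->].
by rewrite -mulrA (mulrC ('X - (conjc z)%:P)) dvdp_mull.
Qed.

Section SymmetricMatrix.
Variables (R : rcfType) (n : nat) (A : 'M[R]_n.+1).
Local Notation pA := (horner_mx A).
Implicit Types (p q : {poly R}) (x y z : 'cV[R]_n.+1).

Lemma horner_mx_eigen p y a : A *m y = a *: y -> pA p *m y = p.[a] *: y.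
Proof.
move=> Ay; elim/poly_ind: p => [|p c IH].
  by rewrite rmorph0 mul0mx horner0 scale0r.
rewrite rmorphD rmorphM /= horner_mx_X horner_mx_C -mulmxE mulmxDl -mulmxA Ay.
by rewrite -scalemxAr IH mul_scalar_mx hornerMXaddC scalerA scalerDl mulrC.
Qed.

Hypothesis symA : A^T = A.

Lemma tr_horner_mx p : (pA p)^T = pA p.
Proof.
elim/poly_ind: p => [|p c IH]; first by rewrite rmorph0 trmx0.
rewrite rmorphD rmorphM /= horner_mx_X horner_mx_C linearD /= tr_scalar_mx.
rewrite -!mulmxE trmx_mul IH symA; congr (_ + _).
by have := comm_horner_mx2 A p 'X; rewrite horner_mx_X /GRing.comm -!mulmxE.
Qed.

Lemma dot_horner_mxl p x y : dot (pA p *m x) y = dot x (pA p *m y).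
Proof. by rewrite dot_mulmxl tr_horner_mx. Qed.

(* With q = r (X - a): y = (A - a) r(A) x and (A - a) y = 0, so |y|^2 = 0. *)
Lemma horner_mx_root_eigen q a x :
  root q a -> A *m (pA q *m x) = a *: (pA q *m x) -> pA q *m x = 0.
Proof.
move=> /factor_theorem[r ->]; set y := pA _ *m x => Ay.
have Dy : y = pA ('X - a%:P) *m (pA r *m x).
  by rewrite /y mulrC rmorphM mulmxA.
apply/eqP; rewrite -dotxx_eq0 {1}Dy dot_horner_mxl (horner_mx_eigen _ Ay).
by rewrite hornerXsubC subrr scale0r dot0r.
Qed.

Lemma horner_mx_quadratic_eq0 a b y : b != 0 ->
  pA (('X - a%:P) ^+ 2 + (b ^+ 2)%:P) *m y = 0 -> y = 0.
Proof.
move=> b0 qy0; apply/eqP; rewrite -dotxx_eq0 eq_le dotxx_ge0 andbT.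
have : dot y (pA (('X - a%:P) ^+ 2 + (b ^+ 2)%:P) *m y) = 0 by rewrite qy0 dot0r.
rewrite rmorphD rmorphXn /= horner_mx_C expr2 -mulmxE mulmxDl mul_scalar_mx.
rewrite -mulmxA dotDr dotZr -dot_horner_mxl => sum0.
have b2 : 0 < b ^+ 2 by rewrite exprn_even_gt0 //= b0.
rewrite -(pmulr_rle0 _ b2); have := dotxx_ge0 (pA ('X - a%:P) *m y); lra.
Qed.

Section InvariantSubspace.
Variables (U : 'cV[R]_n.+1 -> Prop) (lam : R).
Hypotheses (U_add : forall x y, U x -> U y -> U (x + y))
  (U_scale : forall c x, U x -> U (c *: x))
  (U_mul : forall x, U x -> U (A *m x))
  (U_eigen_bound : forall y a, U y -> y != 0 -> A *m y = a *: y -> `|a| <= lam).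
Local Notation bounded x := (dot (A *m x) (A *m x) <= lam ^+ 2 * dot x x).

Lemma U_horner_mx p x : U x -> U (pA p *m x).
Proof.
elim/poly_ind: p x => [|p c IH] x Ux.
  by rewrite rmorph0 mul0mx -(scale0r x); apply: U_scale.
rewrite rmorphD rmorphM /= horner_mx_X horner_mx_C -mulmxE mulmxDl -mulmxA.
by rewrite mul_scalar_mx; apply: U_add; [apply/IH/U_mul | apply: U_scale].
Qed.

Lemma bounded_add_eigen z y a c : U y -> y != 0 -> A *m y = a *: y ->
  dot z y = 0 -> bounded z -> bounded (z + c *: y).
Proof.
move=> Uy y0 Ay zy0 bz; have la := U_eigen_bound Uy y0 Ay.
have Azy0 : dot (A *m z) y = 0 by rewrite dot_mulmxl symA Ay dotZr zy0 mulr0.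
rewrite mulmxDr -scalemxAr Ay scalerA !dotxxD_orth ?dotZr ?zy0 ?Azy0 ?mulr0 //.
rewrite !dotZl.
have a2 : a ^+ 2 <= lam ^+ 2.
  by rewrite -real_normK ?num_real //; have := normr_ge0 a; nra.
have := ler_wpM2r (mulr_ge0 (sqr_ge0 c) (dotxx_ge0 y)) a2; nra.
Qed.

Lemma bounded_factor_XsubC q a x : U x -> pA (q * ('X - a%:P)) *m x = 0 ->
  (forall z, U z -> pA q *m z = 0 -> bounded z) -> bounded x.
Proof.
move=> Ux px0 IHq; set y := pA q *m x.
have Ay : A *m y = a *: y.
  have : pA ('X - a%:P) *m y = 0 by rewrite /y mulmxA mulmxE -rmorphM mulrC.
  rewrite rmorphB /= horner_mx_X horner_mx_C mulmxBl mul_scalar_mx.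
  by move/eqP; rewrite subr_eq0 => /eqP.
have [y0|y0] := eqVneq y 0; first exact: IHq.
have qa : q.[a] != 0.
  by apply/negP => qa0; move: y0; rewrite /y (horner_mx_root_eigen qa0 Ay) eqxx.
set x2 := x - q.[a]^-1 *: y.
have qx2 : pA q *m x2 = 0.
  by rewrite mulmxBr -scalemxAr (horner_mx_eigen _ Ay) scalerA mulVf // scale1r subrr.
have x2y : dot x2 y = 0.
  apply/eqP; rewrite -(mulrI_eq0 _ (lregP qa)) -dotZr -(horner_mx_eigen _ Ay).
  by rewrite -dot_horner_mxl qx2 dotC dot0r.
have Ux2 : U x2 by rewrite /x2 -scaleNr; apply/U_add/U_scale/U_horner_mx.
rewrite -(subrK (q.[a]^-1 *: y) x) -/x2.
by apply: (bounded_add_eigen (a := a)) => //; [apply: U_horner_mx | apply: IHq].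
Qed.

Lemma bounded_annihilated p x : p != 0 -> U x -> pA p *m x = 0 -> bounded x.
Proof.
have [m] := ubnP (size p); elim: m p x => // m IHm p x.
rewrite ltnS => szp p0 Ux px0.
have [/eqP/size_poly1P[c c0 Dp]|sz1] := eqVneq (size p) 1.
  move: px0; rewrite Dp horner_mx_C mul_scalar_mx => /eqP.
  by rewrite scaler_eq0 (negbTE c0) => /eqP->; rewrite mulmx0 !dot0r mulr0.
have [[a /factor_theorem[q Dp]] | [a [b [b0 /dvdpP[r Dp]]]]] :=
  real_root_or_quadratic_factor sz1.
  have q0 : q != 0 by apply: contraNneq p0 => q0; rewrite Dp q0 mul0r.
  have szq : (size q < m)%N.
    by move: szp; rewrite Dp size_mul ?polyXsubC_eq0 // size_XsubC addn2.
  apply: (bounded_factor_XsubC (q := q) (a := a) Ux); first by rewrite -Dp.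
  by move=> z; apply: IHm.
have r0 : r != 0 by apply: contraNneq p0 => r0; rewrite Dp r0 mul0r.
have szr : (size r < m)%N.
  have sz3 : size (('X - a%:P) ^+ 2 + (b ^+ 2)%:P) = 3%N.
    by rewrite size_polyDl size_exp_XsubC // (leq_ltn_trans (size_polyC_leq1 _)).
  by move: szp; rewrite Dp size_mul // -?size_poly_eq0 sz3 // addn3 => /ltnW.
apply: (IHm r) => //; apply: (horner_mx_quadratic_eq0 (a := a) b0).
by rewrite mulmxA mulmxE -rmorphM mulrC -Dp.
Qed.

Lemma bounded_invariant x : U x -> bounded x.
Proof.
move=> Ux; apply: (bounded_annihilated (p := char_poly A)) => //.
  by rewrite monic_neq0 // char_poly_monic.
by rewrite Cayley_Hamilton mul0mx.
Qed.

End InvariantSubspace.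
End SymmetricMatrix.

Lemma sum_indicator_card (R : nzSemiRingType) (T : finType) (P : pred T) :
  \sum_(u : T) ((P u)%:R : R) = #|[set u | P u]|%:R.
Proof.
rewrite -sum1_card natr_sum [RHS]big_mkcond /=; apply: eq_bigr => u _.
by rewrite inE; case: (P u).
Qed.

Section CellPartition.
Variables (R : realType) (n k : nat) (adj : rel 'I_n) (tau : 'I_n -> 'I_k).
Implicit Types (x y : 'cV[R]_n) (B : {set 'I_n}) (i j : 'I_k).

Lemma in_WperpD x y : in_Wperp tau x -> in_Wperp tau y -> in_Wperp tau (x + y).
Proof. by move=> Wx Wy j; rewrite mulmxDr Wx Wy addr0. Qed.

Lemma in_WperpZ c x : in_Wperp tau x -> in_Wperp tau (c *: x).
Proof. by move=> Wx j; rewrite -scalemxAr Wx scaler0. Qed.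

Definition cell_dev B i (c : R) : 'cV[R]_n :=
  \col_u (((u \in B) && (tau u == i))%:R - c * (tau u == i)%:R).

Lemma in_Wperp_cell_dev B i c :
  c * #|[set v | tau v == i]|%:R = #|[set v in B | tau v == i]|%:R ->
  in_Wperp tau (cell_dev B i c).
Proof.
move=> cBi j; apply/matrixP => i0 j0; rewrite (ord1 i0) (ord1 j0) !mxE.
under eq_bigr => u _ do rewrite !mxE.
have [->|ji] := eqVneq j i.
  have ind (p q : bool) :
      q%:R * ((p && q)%:R - c * q%:R) = (p && q)%:R - c * q%:R :> R.
    by case: p; case: q => /=; ring.
  under eq_bigr => u _ do rewrite ind.
  by rewrite sumrB -mulr_sumr !sum_indicator_card cBi subrr.
rewrite big1 // => u _; have [tj|_] := eqVneq (tau u) j; last by rewrite mul0r.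
by rewrite tj (negbTE ji) andbF mulr0 subrr mulr0.
Qed.

Lemma dotxx_cell_dev B i c : dot (cell_dev B i c) (cell_dev B i c) =
  #|[set v in B | tau v == i]|%:R * (1 - 2 * c) + c ^+ 2 * #|[set v | tau v == i]|%:R.
Proof.
rewrite dotE; under eq_bigr => v _ do rewrite !mxE.
have sq (p q : bool) : ((p && q)%:R - c * q%:R) * ((p && q)%:R - c * q%:R) =
    (p && q)%:R * (1 - 2 * c) + c ^+ 2 * q%:R :> R.
  by case: p; case: q => /=; ring.
under eq_bigr => v _ do rewrite sq.
by rewrite big_split /= -mulr_suml -mulr_sumr !sum_indicator_card.
Qed.

Variable S : 'M[nat]_k.
Hypotheses (adj_sym : symmetric adj) (S_reg : S_regular adj tau S).

Lemma adjmx_tr : (adjmx R adj)^T = adjmx R adj.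
Proof. by apply/matrixP => u v; rewrite !mxE adj_sym. Qed.

Lemma tr_cell_ind_adjmx j : (cell_ind R tau j)^T *m adjmx R adj =
  \sum_l (S l j)%:R *: (cell_ind R tau l)^T.
Proof.
apply/matrixP => i0 v; rewrite (ord1 i0) summxE !mxE.
under eq_bigr => u _ do rewrite !mxE -natrM mulnb adj_sym andbC.
under [RHS]eq_bigr => l _ do rewrite !mxE.
rewrite sum_indicator_card S_reg.2 (bigD1 (tau v)) //= eqxx mulr1.
by rewrite big1 ?addr0 // => l /negbTE; rewrite eq_sym => ->; rewrite mulr0.
Qed.

Lemma in_Wperp_adjmx x : in_Wperp tau x -> in_Wperp tau (adjmx R adj *m x).
Proof.
move=> Wx j; rewrite mulmxA tr_cell_ind_adjmx mulmx_suml big1 // => l _.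
by rewrite -scalemxAl Wx scaler0.
Qed.

Lemma adjmx_cell_dev B i c v : (adjmx R adj *m cell_dev B i c) v 0 =
  #|[set u in B | adj v u && (tau u == i)]|%:R - c * (S (tau v) i)%:R.
Proof.
rewrite mxE; under eq_bigr => u _ do rewrite !mxE mulrBr mulrCA -!natrM !mulnb andbCA.
by rewrite sumrB -mulr_sumr !sum_indicator_card S_reg.2.
Qed.

End CellPartition.

Lemma sum_sqr_cell_deviation_le (R : realType) (n k : nat) (adj : rel 'I_n.+1)
    (tau : 'I_n.+1 -> 'I_k) (S : 'M[nat]_k) (lam : R) (B : {set 'I_n.+1})
    (b : 'I_k -> R) :
  symmetric adj -> S_regular adj tau S ->
  (forall l, bulk_eigenvalue adj tau l -> `|l| <= lam) ->
  (forall i, b i * #|[set v | tau v == i]|%:R = #|[set v in B | tau v == i]|%:R) ->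
  \sum_v \sum_i
     (#|[set u in B | adj v u && (tau u == i)]|%:R - b i * (S (tau v) i)%:R) ^+ 2
  <= lam ^+ 2 * \sum_i b i * (1 - b i) * #|[set v | tau v == i]|%:R.
Proof.
move=> adj_sym S_reg lam_bulk cell_b.
have bounded := bounded_invariant (adjmx_tr R adj_sym) (@in_WperpD R _ _ tau)
  (@in_WperpZ R _ _ tau) (in_Wperp_adjmx adj_sym S_reg)
  (fun y a Wy y0 Ay => lam_bulk a (ex_intro _ y (And3 y0 Wy Ay))).
rewrite exchange_big mulr_sumr; apply: ler_sum => i _.
set x := cell_dev tau B i (b i).
have -> : \sum_v (#|[set u in B | adj v u && (tau u == i)]|%:R
    - b i * (S (tau v) i)%:R) ^+ 2 = dot (adjmx R adj *m x) (adjmx R adj *m x).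
  by rewrite dotE; apply: eq_bigr => v _; rewrite (adjmx_cell_dev S_reg) expr2.
have -> : b i * (1 - b i) * #|[set v | tau v == i]|%:R = dot x x.
  by rewrite dotxx_cell_dev -cell_b; ring.
exact/bounded/in_Wperp_cell_dev.
Qed.

Theorem mainTheorem8 (R : realType) (n k : nat) (adj : rel 'I_n)
  (tau : 'I_n -> 'I_k) (S : 'M[nat]_k) (lB : R) (B : {set 'I_n}) :
  simple_connected_graph adj ->
  S_regular adj tau S ->
  (k < n)%N ->
  is_lambdaB adj tau lB ->
  let ncell (i : 'I_k) : R := #|[set v | tau v == i]|%:R in
  let b (i : 'I_k) : R := #|[set v in B | tau v == i]|%:R / ncell i in
  \sum_(v : 'I_n) \sum_(i : 'I_k)
     (#|[set u in B | adj v u && (tau u == i)]|%:R - b i * (S (tau v) i)%:R) ^+ 2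
  <= lB ^+ 2 * \sum_(i : 'I_k) b i * (1 - b i) * ncell i.
Proof.
case: n adj tau B => [|n] adj tau B [adj_sym _] S_reg; first by rewrite ltn0.
move=> _ [_ lB_max] /=; apply: (sum_sqr_cell_deviation_le adj_sym S_reg lB_max) => i.
have [v tv] := S_reg.1 i; rewrite divfK // pnatr_eq0 -lt0n.
by apply/card_gt0P; exists v; rewrite inE tv.
Qed.
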